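(* For every monotone submodular function $f:2^{[3]}\to\mathbb{R}_+$ and every $\mathbf{x}\in[0,1]^3$, $f^{+}(\mathbf{x})/f^{++}(\mathbf{x})\le4/3$ (with the convention $0/0=1$).
   Context: $[n]=\{1,\dots,n\}$. A set function $f:2^{[n]}\to\mathbb{R}_+$ is monotone if $f(S)\le f(T)$ for $S\subseteq T$, submodular if $f(S)+f(T)\ge f(S\cap T)+f(S\cup T)$. For $\mathbf{x}\in[0,1]^n$: the concave closure $f^{+}(\mathbf{x})=\max\sum_{S\subseteq[n]}\theta(S)f(S)$ over $\theta:2^{[n]}\to\mathbb{R}_{\ge0}$ with $\sum_S\theta(S)=1$ and $\sum_{S\ni i}\theta(S)=x_i$ for all $i$; the upper pairwise independent extension $f^{++}(\mathbf{x})$ is the same maximum with the additional constraints $\sum_{S\ni i,j}\theta(S)=x_ix_j$ for all $i<j$. *)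

From HB Require Import structures.
From mathcomp Require Import all_boot all_order all_algebra.
From mathcomp Require Import classical_sets reals.
Set Implicit Arguments. Unset Strict Implicit. Unset Printing Implicit Defensive.
Import Order.TTheory GRing.Theory Num.Theory.
Local Open Scope ring_scope.
Local Open Scope classical_set_scope.

Definition monotone_setfun (R : realType) (n : nat) (f : {set 'I_n} -> R) :=
  forall S T : {set 'I_n}, S \subset T -> f S <= f T.

Definition submodular_setfun (R : realType) (n : nat) (f : {set 'I_n} -> R) :=
  forall S T : {set 'I_n}, f (S :&: T) + f (S :|: T) <= f S + f T.

Definition cc_feasible (R : realType) (n : nat) (x : 'I_n -> R)
    (theta : {set 'I_n} -> R) : Prop :=
  (forall S, 0 <= theta S) /\
  (\sum_(S : {set 'I_n}) theta S = 1) /\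
  (forall i : 'I_n, \sum_(S : {set 'I_n} | i \in S) theta S = x i).

Definition pi_feasible (R : realType) (n : nat) (x : 'I_n -> R)
    (theta : {set 'I_n} -> R) : Prop :=
  cc_feasible x theta /\
  (forall i j : 'I_n, (i < j)%N ->
     \sum_(S : {set 'I_n} | (i \in S) && (j \in S)) theta S = x i * x j).

Definition objective (R : realType) (n : nat) (f : {set 'I_n} -> R)
    (theta : {set 'I_n} -> R) : R :=
  \sum_(S : {set 'I_n}) theta S * f S.

Definition concave_closure (R : realType) (n : nat) (f : {set 'I_n} -> R)
    (x : 'I_n -> R) : R :=
  sup [set objective f theta | theta in [set theta | cc_feasible x theta]].

Definition upper_pi_ext (R : realType) (n : nat) (f : {set 'I_n} -> R)
    (x : 'I_n -> R) : R :=
  sup [set objective f theta | theta in [set theta | pi_feasible x theta]].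

From HB Require Import structures.
From mathcomp Require Import all_boot all_order all_algebra.
From mathcomp Require Import classical_sets reals.
From mathcomp Require Import ring lra.
Set Implicit Arguments. Unset Strict Implicit. Unset Printing Implicit Defensive.
Import Order.TTheory GRing.Theory Num.Theory.
Local Open Scope ring_scope.

(** The pairwise independent distributions on 2^[3] with marginals x form a
    one-parameter family, indexed by the mass t of the full set.  Depending on
    the sign of the third-order difference of f, f is a nonnegative combination
    of constants, indicators [i \in S], pair coverages [S meets {i,j}] and one
    of min(|S|,1) (sign >= 0) or min(|S|,2) (sign <= 0).  Against any
    distribution with marginals x, each of these has expectation at most 4/3
    times its expectation under one fixed member of the family: the largest t
    in the first case, t = x0 x1 x2 (full independence) in the second.  For the
    pair coverages this is 1 - (1-a)(1-b) >= 3/4 min(1, a+b), for the others a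
    similar inequality in three variables.  Linearity of the objective in f
    then gives the bound for both suprema. *)

Section UnionBounds.
Variable R : realFieldType.
Implicit Types a b c m : R.

Lemma union2_bound a b m : 0 <= a <= 1 -> 0 <= b <= 1 ->
  m <= a + b -> m <= 1 -> m <= 4/3 * (a + b - a * b).
Proof.
move=> /andP[a0 a1] /andP[b0 b1] mab m1.
have : 0 <= (a - b) ^+ 2 by apply: sqr_ge0.
by case: (lerP (a + b) 1) => ab1; nra.
Qed.

Lemma union3_bound a b c m : 0 <= a <= 1 -> 0 <= b <= 1 -> 0 <= c <= 1 ->
  m <= a + b + c -> m <= 1 -> 3/4 * m <= a + b + c - a * c - b * c.
Proof.
move=> /andP[a0 a1] /andP[b0 b1] /andP[c0 c1] mabc m1.
have : 0 <= (2 * (a + b) - 1) ^+ 2 by apply: sqr_ge0.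
case: (lerP (a + b) 1) => ab1; last by nra.
case: (lerP (a + b + c) 1) => abc1; last by nra.
case: (lerP (a + b) (1/4)) => ab_small.
- have : 0 <= c * (1 - 4 * (a + b)) by apply: mulr_ge0; lra.
  nra.
- have : 0 <= (1 - (a + b) - c) * (4 * (a + b) - 1) by apply: mulr_ge0; lra.
  nra.
Qed.

Lemma cover3_bound a b c m : 0 <= a <= 1 -> 0 <= b <= 1 -> 0 <= c <= 1 ->
  m <= a + b + c -> m <= 2 -> m <= 4/3 * (a + b + c - a * b * c).
Proof.
move=> /andP[a0 a1] /andP[b0 b1] /andP[c0 c1] mabc m2.
have amgm : 4 * (a * b) <= (a + b) ^+ 2.
  have : 0 <= (a - b) ^+ 2 by apply: sqr_ge0.
  nra.
have ab0 : 0 <= a * b by apply: mulr_ge0.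
have ab1 : a * b <= 1 by nra.
have sq : 0 <= (a + b - 1) ^+ 2 by apply: sqr_ge0.
case: (lerP (a + b + c) 2) => abc2.
- suff : 4 * (a * b * c) <= a + b + c by lra.
  have : 4 * (a * b * c) <= (a + b) ^+ 2 * c by rewrite -mulrA; nra.
  case: (lerP (a + b) 1) => anb0; first nra.
  have : 0 <= (a + b) ^+ 2 - 1 by nra.
  nra.
- suff : 3/2 <= a + b + c - a * b * c by lra.
  have : (2 - (a + b)) * (1 - a * b) <= c * (1 - a * b) by apply: ler_wpM2r; lra.
  have : a * b * (2 - (a + b)) <= (a + b) ^+ 2 / 4 * (2 - (a + b)).
    by apply: ler_wpM2r; lra.
  have : (a + b) ^+ 2 * (2 - (a + b)) <= 2 by nra.
  nra.
Qed.

End UnionBounds.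

Section Objective.
Variables (R : realType) (n : nat).
Implicit Types (x : 'I_n -> R) (i j : 'I_n) (f g theta : {set 'I_n} -> R).

Lemma eq_objective f g theta : f =1 g -> objective f theta = objective g theta.
Proof. by move=> fg; apply: eq_bigr => S _; rewrite fg. Qed.

Lemma objectiveD f g theta :
  objective (fun S => f S + g S) theta = objective f theta + objective g theta.
Proof. by rewrite /objective -big_split; apply: eq_bigr => S _; rewrite mulrDr. Qed.

Lemma objectiveB f g theta :
  objective (fun S => f S - g S) theta = objective f theta - objective g theta.
Proof. by rewrite /objective -sumrB; apply: eq_bigr => S _; rewrite mulrBr. Qed.

Lemma objectiveZ c f theta :
  objective (fun S => c * f S) theta = c * objective f theta.
Proof. by rewrite /objective mulr_sumr; apply: eq_bigr => S _; rewrite mulrCA. Qed.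

Lemma ler_objective f g theta : (forall S, 0 <= theta S) ->
  (forall S, f S <= g S) -> objective f theta <= objective g theta.
Proof. by move=> th0 fg; apply: ler_sum => S _; apply: ler_wpM2l. Qed.

Lemma objective_ge0 f theta : (forall S, 0 <= theta S) -> (forall S, 0 <= f S) ->
  0 <= objective f theta.
Proof. by move=> th0 f0; apply: sumr_ge0 => S _; apply: mulr_ge0. Qed.

Lemma objective_cst c x theta : cc_feasible x theta ->
  objective (fun _ => c) theta = c.
Proof. by case=> _ [th1 _]; rewrite /objective -mulr_suml th1 mul1r. Qed.

Lemma objective_le_cst x c f theta : cc_feasible x theta ->
  (forall S, f S <= c) -> objective f theta <= c.
Proof.
move=> th fc; rewrite -(objective_cst c th).
by apply: ler_objective => //; case: th.
Qed.

Lemma objective_mem x i theta : cc_feasible x theta ->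
  objective (fun S => (i \in S)%:R) theta = x i.
Proof.
case=> _ [_ <-]; rewrite /objective [RHS]big_mkcond.
by apply: eq_bigr => S _; case: (i \in S); rewrite ?mulr1 ?mulr0.
Qed.

Lemma objective_mem2 x i j theta : pi_feasible x theta -> (i < j)%N ->
  objective (fun S => ((i \in S) && (j \in S))%:R) theta = x i * x j.
Proof.
case=> _ pair ij; rewrite -pair // /objective [RHS]big_mkcond.
by apply: eq_bigr => S _; case: (_ && _); rewrite ?mulr1 ?mulr0.
Qed.

Definition union_ind (i j : 'I_n) (S : {set 'I_n}) : R := ((i \in S) || (j \in S))%:R.

Lemma union_indE i j S :
  union_ind i j S = (i \in S)%:R + (j \in S)%:R - ((i \in S) && (j \in S))%:R.
Proof. by rewrite /union_ind; case: (i \in S); case: (j \in S); rewrite /=; ring. Qed.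

Lemma objective_union_le x i j theta : cc_feasible x theta ->
  objective (union_ind i j) theta <= x i + x j /\ objective (union_ind i j) theta <= 1.
Proof.
move=> th; split; last first.
  by apply: objective_le_cst th _ => S; rewrite /union_ind lern1 leq_b1.
rewrite (eq_objective _ (union_indE i j)) objectiveB objectiveD !(objective_mem _ th).
suff : 0 <= objective (fun S => ((i \in S) && (j \in S))%:R) theta by lra.
by apply: objective_ge0; case: th.
Qed.

Lemma objective_union_pi x i j theta : pi_feasible x theta -> (i < j)%N ->
  objective (union_ind i j) theta = x i + x j - x i * x j.
Proof.
move=> th ij; have cc : cc_feasible x theta by case: th.
by rewrite (eq_objective _ (union_indE i j)) objectiveB objectiveD
  !(objective_mem _ cc) (objective_mem2 th ij).
Qed.

End Objective.

Arguments union_ind {R n} i j S.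

Section Domination.
Variables (R : realType) (n : nat) (x : 'I_n -> R) (theta theta' : {set 'I_n} -> R).
Hypotheses (x01 : forall i, 0 <= x i <= 1)
  (theta_cc : cc_feasible x theta) (theta'_pi : pi_feasible x theta').
Implicit Types (i j : 'I_n) (g h : {set 'I_n} -> R).

Definition dominated g := objective g theta <= 4/3 * objective g theta'.

Lemma dominated_eq g h : g =1 h -> dominated g -> dominated h.
Proof. by move=> gh; rewrite /dominated !(eq_objective _ gh). Qed.

Lemma dominatedD g h : dominated g -> dominated h -> dominated (fun S => g S + h S).
Proof. by rewrite /dominated !objectiveD; lra. Qed.

Lemma dominatedZ c g : 0 <= c -> dominated g -> dominated (fun S => c * g S).
Proof.
by move=> c0 dg; rewrite /dominated !objectiveZ mulrCA; apply: ler_wpM2l.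
Qed.

Let theta'_cc : cc_feasible x theta'. Proof. by case: theta'_pi. Qed.

Lemma dominated_cst c : 0 <= c -> dominated (fun _ => c).
Proof.
move=> c0; rewrite /dominated (objective_cst c theta_cc) (objective_cst c theta'_cc).
lra.
Qed.

Lemma dominated_mem i : dominated (fun S => (i \in S)%:R).
Proof.
rewrite /dominated (objective_mem i theta_cc) (objective_mem i theta'_cc).
by have /andP[] := x01 i; lra.
Qed.

Lemma dominated_union i j : (i < j)%N -> dominated (union_ind i j).
Proof.
move=> ij; rewrite /dominated (objective_union_pi theta'_pi ij).
have [le_sum le1] := objective_union_le i j theta_cc.
exact: union2_bound.
Qed.

End Domination.

Definition o0 : 'I_3 := ord0.
Definition o1 : 'I_3 := Ordinal (isT : (1 < 3)%N).
Definition o2 : 'I_3 := Ordinal (isT : (2 < 3)%N).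

Lemma ord3P (i : 'I_3) : [\/ i = o0, i = o1 | i = o2].
Proof.
case: i => [[|[|[|m]]] lt_i3] //.
- by constructor 1; apply: val_inj.
- by constructor 2; apply: val_inj.
- by constructor 3; apply: val_inj.
Qed.

Definition set3 (b0 b1 b2 : bool) : {set 'I_3} :=
  [set i | [|| (i == o0) && b0, (i == o1) && b1 | (i == o2) && b2]].

Lemma set3_mem0 b0 b1 b2 : (o0 \in set3 b0 b1 b2) = b0.
Proof. by rewrite inE /=; case: b0. Qed.
Lemma set3_mem1 b0 b1 b2 : (o1 \in set3 b0 b1 b2) = b1.
Proof. by rewrite inE /=; case: b1; rewrite ?orbF ?orbT. Qed.
Lemma set3_mem2 b0 b1 b2 : (o2 \in set3 b0 b1 b2) = b2.
Proof. by rewrite inE /=; case: b2; rewrite ?orbF ?orbT. Qed.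
Definition set3_memE := (set3_mem0, set3_mem1, set3_mem2).

Lemma set3_mem (S : {set 'I_3}) : S = set3 (o0 \in S) (o1 \in S) (o2 \in S).
Proof. by apply/setP => i; case: (ord3P i) => ->; rewrite set3_memE. Qed.

Lemma set3_ind (P : {set 'I_3} -> Prop) :
  (forall b0 b1 b2, P (set3 b0 b1 b2)) -> forall S, P S.
Proof. by move=> Pset3 S; rewrite [S]set3_mem. Qed.

Lemma set3I a0 a1 a2 b0 b1 b2 :
  set3 a0 a1 a2 :&: set3 b0 b1 b2 = set3 (a0 && b0) (a1 && b1) (a2 && b2).
Proof. by apply/setP => i; case: (ord3P i) => ->; rewrite inE !set3_memE. Qed.

Lemma set3U a0 a1 a2 b0 b1 b2 :
  set3 a0 a1 a2 :|: set3 b0 b1 b2 = set3 (a0 || b0) (a1 || b1) (a2 || b2).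
Proof. by apply/setP => i; case: (ord3P i) => ->; rewrite inE !set3_memE. Qed.

Lemma set3_subset a0 a1 a2 b0 b1 b2 : a0 ==> b0 -> a1 ==> b1 -> a2 ==> b2 ->
  set3 a0 a1 a2 \subset set3 b0 b1 b2.
Proof.
move=> le0 le1 le2; apply/fintype.subsetP => i.
by case: (ord3P i) => ->; rewrite !set3_memE; apply/implyP.
Qed.

Lemma sum_set3 (V : nmodType) (F : {set 'I_3} -> V) :
  \sum_(S : {set 'I_3}) F S =
  F (set3 true true true) + F (set3 true true false)
  + (F (set3 true false true) + F (set3 true false false))
  + (F (set3 false true true) + F (set3 false true false)
  + (F (set3 false false true) + F (set3 false false false))).
Proof.
pose bools_of (S : {set 'I_3}) := (o0 \in S, (o1 \in S, o2 \in S)).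
rewrite (reindex (fun b : bool * (bool * bool) => set3 b.1 b.2.1 b.2.2)); last first.
  exists bools_of => [[b0 [b1 b2]]|S] _; first by rewrite /bools_of /= !set3_memE.
  by rewrite [RHS]set3_mem.
rewrite -(pair_bigA _ (fun b0 (b : bool * bool) => F (set3 b0 b.1 b.2))) !big_bool /=.
by rewrite -!(pair_bigA _ (fun b1 b2 => F (set3 _ b1 b2))) !big_bool.
Qed.

Section ThreeElements.
Variable R : realType.
Implicit Types (x : 'I_3 -> R) (t : R) (theta : {set 'I_3} -> R).

(* The unique pairwise independent distribution with marginals x giving mass t
   to the full set. *)
Definition pi_dist3 x t (S : {set 'I_3}) : R :=
  match o0 \in S, o1 \in S, o2 \in S with
  | true, true, true => t
  | true, true, false => x o0 * x o1 - t
  | true, false, true => x o0 * x o2 - t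
  | false, true, true => x o1 * x o2 - t
  | true, false, false => x o0 - x o0 * x o1 - x o0 * x o2 + t
  | false, true, false => x o1 - x o0 * x o1 - x o1 * x o2 + t
  | false, false, true => x o2 - x o0 * x o2 - x o1 * x o2 + t
  | false, false, false =>
      1 - x o0 - x o1 - x o2 + x o0 * x o1 + x o0 * x o2 + x o1 * x o2 - t
  end.

Lemma pi_dist3_feasible x t : (forall S, 0 <= pi_dist3 x t S) ->
  pi_feasible x (pi_dist3 x t).
Proof.
move=> ge0; split; first split=> //; first split.
- by rewrite sum_set3 /pi_dist3 !set3_memE; ring.
- move=> i; rewrite big_mkcond sum_set3.
  by case: (ord3P i) => ->; rewrite /pi_dist3 !set3_memE /=; ring.
- move=> i j; case: (ord3P i) => ->; case: (ord3P j) => -> // _;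
  by rewrite big_mkcond sum_set3 /pi_dist3 !set3_memE /=; ring.
Qed.

(* The largest t for which [pi_dist3 x t] is nonnegative. *)
Definition max_triple_mass x : R :=
  Num.min (Num.min (x o0 * x o1) (x o0 * x o2))
          (Num.min (x o1 * x o2)
             (1 - x o0 - x o1 - x o2 + x o0 * x o1 + x o0 * x o2 + x o1 * x o2)).

Lemma pi_dist3_indep_ge0 x : (forall i, 0 <= x i <= 1) ->
  forall S, 0 <= pi_dist3 x (x o0 * x o1 * x o2) S.
Proof.
move=> x01; have /andP[a0 a1] := x01 o0; have /andP[b0 b1] := x01 o1.
have /andP[c0 c1] := x01 o2.
have na0 : 0 <= 1 - x o0 by rewrite subr_ge0.
have nb0 : 0 <= 1 - x o1 by rewrite subr_ge0.
have nc0 : 0 <= 1 - x o2 by rewrite subr_ge0.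
have ge0_prod3 (u v w : R) : 0 <= u -> 0 <= v -> 0 <= w -> 0 <= u * v * w.
  by move=> u0 v0 w0; rewrite !mulr_ge0.
apply: set3_ind => -[] [] []; rewrite /pi_dist3 !set3_memE.
- exact: ge0_prod3.
- by have := ge0_prod3 _ _ _ a0 b0 nc0; nra.
- by have := ge0_prod3 _ _ _ a0 nb0 c0; nra.
- by have := ge0_prod3 _ _ _ a0 nb0 nc0; nra.
- by have := ge0_prod3 _ _ _ na0 b0 c0; nra.
- by have := ge0_prod3 _ _ _ na0 b0 nc0; nra.
- by have := ge0_prod3 _ _ _ na0 nb0 c0; nra.
- by have := ge0_prod3 _ _ _ na0 nb0 nc0; nra.
Qed.

Lemma pi_dist3_max_ge0 x : (forall i, 0 <= x i <= 1) ->
  forall S, 0 <= pi_dist3 x (max_triple_mass x) S.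
Proof.
move=> x01; have indep := pi_dist3_indep_ge0 x01.
have := indep (set3 true true true); have := indep (set3 true true false).
have := indep (set3 true false true); have := indep (set3 true false false).
have := indep (set3 false true true); have := indep (set3 false true false).
have := indep (set3 false false true); have := indep (set3 false false false).
(* Every bound on [t] below is a nonnegative combination of these masses. *)
rewrite /pi_dist3 !set3_memE => m1 m2 m3 m4 m5 m6 m7 m8.
set t := max_triple_mass x.
have [t_le01 t_le02 t_le12 t_le_empty] :
    [/\ t <= x o0 * x o1, t <= x o0 * x o2, t <= x o1 * x o2
      & t <= 1 - x o0 - x o1 - x o2 + x o0 * x o1 + x o0 * x o2 + x o1 * x o2].
  by split; rewrite /t /max_triple_mass !ge_min lexx ?orbT.
have le_t L : L <= x o0 * x o1 -> L <= x o0 * x o2 -> L <= x o1 * x o2 ->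
    L <= 1 - x o0 - x o1 - x o2 + x o0 * x o1 + x o0 * x o2 + x o1 * x o2 -> L <= t.
  by move=> *; rewrite /t /max_triple_mass !le_min; apply/andP; split; apply/andP.
have t_ge0 : 0 <= t by apply: le_t; lra.
have t_ge_0 : x o0 * x o1 + x o0 * x o2 - x o0 <= t by apply: le_t; lra.
have t_ge_1 : x o0 * x o1 + x o1 * x o2 - x o1 <= t by apply: le_t; lra.
have t_ge_2 : x o0 * x o2 + x o1 * x o2 - x o2 <= t by apply: le_t; lra.
by apply: set3_ind => -[] [] []; rewrite /pi_dist3 !set3_memE -/t; lra.
Qed.

(* [nonempty3 S = min(|S|, 1)] and [capped_size3 S = min(|S|, 2)]. *)
Definition nonempty3 (S : {set 'I_3}) : R := [|| o0 \in S, o1 \in S | o2 \in S]%:R.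

Definition capped_size3 (S : {set 'I_3}) : R :=
  (o0 \in S)%:R + (o1 \in S)%:R + (o2 \in S)%:R - [&& o0 \in S, o1 \in S & o2 \in S]%:R.

Lemma objective_size3 x theta : cc_feasible x theta ->
  objective (fun S => (o0 \in S)%:R + (o1 \in S)%:R + (o2 \in S)%:R) theta
  = x o0 + x o1 + x o2.
Proof. by move=> th; rewrite !objectiveD !(objective_mem _ th). Qed.

Lemma dominated_nonempty3 x theta : (forall i, 0 <= x i <= 1) -> cc_feasible x theta ->
  dominated theta (pi_dist3 x (max_triple_mass x)) nonempty3.
Proof.
move=> x01 th; have [th0 _] := th; rewrite /dominated.
have -> : objective nonempty3 (pi_dist3 x (max_triple_mass x)) =
    x o0 + x o1 + x o2 - x o0 * x o1 - x o0 * x o2 - x o1 * x o2 + max_triple_mass x.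
  by rewrite /objective sum_set3 /pi_dist3 /nonempty3 !set3_memE /=; ring.
have le_size : objective nonempty3 theta <= x o0 + x o1 + x o2.
  rewrite -(objective_size3 th); apply: ler_objective => // S.
  rewrite /nonempty3.
  by case: (o0 \in S); case: (o1 \in S); case: (o2 \in S); rewrite /=; lra.
have le1 : objective nonempty3 theta <= 1.
  by apply: objective_le_cst th _ => S; rewrite /nonempty3 lern1 leq_b1.
set m := objective nonempty3 theta in le_size le1 *.
have u3 := union3_bound (x01 _) (x01 _) (x01 _) _ le1.
suff : 3/4 * m - (x o0 + x o1 + x o2 - x o0 * x o1 - x o0 * x o2 - x o1 * x o2)
    <= max_triple_mass x by lra.
rewrite /max_triple_mass !le_min; apply/andP; split; apply/andP; split; last by lra.
- by have := u3 o0 o1 o2 le_size; lra.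
- by have := u3 o0 o2 o1 ltac:(lra); lra.
- by have := u3 o1 o2 o0 ltac:(lra); lra.
Qed.

Lemma dominated_capped_size3 x theta : (forall i, 0 <= x i <= 1) -> cc_feasible x theta ->
  dominated theta (pi_dist3 x (x o0 * x o1 * x o2)) capped_size3.
Proof.
move=> x01 th; have [th0 _] := th; rewrite /dominated.
have -> : objective capped_size3 (pi_dist3 x (x o0 * x o1 * x o2)) =
    x o0 + x o1 + x o2 - x o0 * x o1 * x o2.
  by rewrite /objective sum_set3 /pi_dist3 /capped_size3 !set3_memE /=; ring.
have le_size : objective capped_size3 theta <= x o0 + x o1 + x o2.
  rewrite -(objective_size3 th); apply: ler_objective => // S.
  rewrite /capped_size3.
  by case: (o0 \in S); case: (o1 \in S); case: (o2 \in S); rewrite /=; lra.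
have le2 : objective capped_size3 theta <= 2.
  apply: objective_le_cst th _ => S.
  rewrite /capped_size3.
  by case: (o0 \in S); case: (o1 \in S); case: (o2 \in S); rewrite /=; lra.
exact: cover3_bound.
Qed.

End ThreeElements.

Arguments nonempty3 {R} S.
Arguments capped_size3 {R} S.

Section Decomposition.
Variables (R : realType) (f : {set 'I_3} -> R).
Hypotheses (f_ge0 : forall S, 0 <= f S) (f_mono : monotone_setfun f)
  (f_sub : submodular_setfun f).

Local Notation f_e := (f (set3 false false false)).
Local Notation f_0 := (f (set3 true false false)).
Local Notation f_1 := (f (set3 false true false)).
Local Notation f_2 := (f (set3 false false true)).
Local Notation f_01 := (f (set3 true true false)).
Local Notation f_02 := (f (set3 true false true)).
Local Notation f_12 := (f (set3 false true true)).
Local Notation f_012 := (f (set3 true true true)).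
Local Notation m i := (fun S : {set 'I_3} => (i \in S)%:R).

Definition third_difference : R := f_012 - f_01 - f_02 - f_12 + f_0 + f_1 + f_2 - f_e.

Lemma setfun3_coverageE S : f S =
  f_e + (f_012 - f_12) * m o0 S + (f_012 - f_02) * m o1 S + (f_012 - f_01) * m o2 S
  + (f_02 + f_12 - f_2 - f_012) * union_ind o0 o1 S
  + (f_01 + f_12 - f_1 - f_012) * union_ind o0 o2 S
  + (f_01 + f_02 - f_0 - f_012) * union_ind o1 o2 S
  + third_difference * nonempty3 S.
Proof.
move: S; apply: set3_ind => -[] [] [];
by rewrite /union_ind /nonempty3 /third_difference !set3_memE /=; ring.
Qed.

Lemma setfun3_cappedE S : f S =
  f_e + (f_012 - f_12) * m o0 S + (f_012 - f_02) * m o1 S + (f_012 - f_01) * m o2 S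
  + (f_0 + f_1 - f_01 - f_e) * union_ind o0 o1 S
  + (f_0 + f_2 - f_02 - f_e) * union_ind o0 o2 S
  + (f_1 + f_2 - f_12 - f_e) * union_ind o1 o2 S
  + (- third_difference) * capped_size3 S.
Proof.
move: S; apply: set3_ind => -[] [] [];
by rewrite /union_ind /capped_size3 /third_difference !set3_memE /=; ring.
Qed.

Let f_mono3 a0 a1 a2 b0 b1 b2 : a0 ==> b0 -> a1 ==> b1 -> a2 ==> b2 ->
  f (set3 a0 a1 a2) <= f (set3 b0 b1 b2).
Proof. by move=> *; apply: f_mono; apply: set3_subset. Qed.

Let f_sub3 a0 a1 a2 b0 b1 b2 :
  f (set3 (a0 && b0) (a1 && b1) (a2 && b2)) + f (set3 (a0 || b0) (a1 || b1) (a2 || b2))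
  <= f (set3 a0 a1 a2) + f (set3 b0 b1 b2).
Proof. by rewrite -set3I -set3U f_sub. Qed.

Section Dominated.
Variables (x : 'I_3 -> R) (theta : {set 'I_3} -> R).
Hypotheses (x01 : forall i, 0 <= x i <= 1) (theta_cc : cc_feasible x theta).

Lemma dominated_setfun3_max_triple : 0 <= third_difference ->
  dominated theta (pi_dist3 x (max_triple_mass x)) f.
Proof.
move=> D_ge0; have pi := pi_dist3_feasible (pi_dist3_max_ge0 x01).
have := @f_mono3 false true true true true true isT isT isT.
have := @f_mono3 true false true true true true isT isT isT.
have := @f_mono3 true true false true true true isT isT isT.
have := f_sub3 true false true false true true.
have := f_sub3 true true false false true true.
have := f_sub3 true true false true false true.
rewrite /= => sub_0 sub_1 sub_2 mono_01 mono_02 mono_12.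
apply: dominated_eq (fun S => esym (setfun3_coverageE S)) _.
repeat apply: dominatedD.
- exact: dominated_cst theta_cc pi _ (f_ge0 _).
- by apply: dominatedZ; [lra | exact: dominated_mem x01 theta_cc pi _].
- by apply: dominatedZ; [lra | exact: dominated_mem x01 theta_cc pi _].
- by apply: dominatedZ; [lra | exact: dominated_mem x01 theta_cc pi _].
- by apply: dominatedZ; [lra | apply: (dominated_union x01 theta_cc pi)].
- by apply: dominatedZ; [lra | apply: (dominated_union x01 theta_cc pi)].
- by apply: dominatedZ; [lra | apply: (dominated_union x01 theta_cc pi)].
- exact: dominatedZ D_ge0 (dominated_nonempty3 x01 theta_cc).
Qed.

Lemma dominated_setfun3_indep : third_difference <= 0 ->
  dominated theta (pi_dist3 x (x o0 * x o1 * x o2)) f.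
Proof.
move=> D_le0; have pi := pi_dist3_feasible (pi_dist3_indep_ge0 x01).
have := @f_mono3 false true true true true true isT isT isT.
have := @f_mono3 true false true true true true isT isT isT.
have := @f_mono3 true true false true true true isT isT isT.
have := f_sub3 true false false false true false.
have := f_sub3 true false false false false true.
have := f_sub3 false true false false false true.
rewrite /= => sub_12 sub_02 sub_01 mono_01 mono_02 mono_12.
apply: dominated_eq (fun S => esym (setfun3_cappedE S)) _.
repeat apply: dominatedD.
- exact: dominated_cst theta_cc pi _ (f_ge0 _).
- by apply: dominatedZ; [lra | exact: dominated_mem x01 theta_cc pi _].
- by apply: dominatedZ; [lra | exact: dominated_mem x01 theta_cc pi _].
- by apply: dominatedZ; [lra | exact: dominated_mem x01 theta_cc pi _].
- by apply: dominatedZ; [lra | apply: (dominated_union x01 theta_cc pi)].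
- by apply: dominatedZ; [lra | apply: (dominated_union x01 theta_cc pi)].
- by apply: dominatedZ; [lra | apply: (dominated_union x01 theta_cc pi)].
- by apply: dominatedZ (dominated_capped_size3 x01 theta_cc); rewrite oppr_ge0.
Qed.

End Dominated.

Lemma exists_dominating_pi_feasible x : (forall i, 0 <= x i <= 1) ->
  exists theta', pi_feasible x theta' /\
    forall theta, cc_feasible x theta -> dominated theta theta' f.
Proof.
move=> x01; case: (lerP 0 third_difference) => [D_ge0 | /ltW D_le0].
- exists (pi_dist3 x (max_triple_mass x)).
  split; first exact: pi_dist3_feasible (pi_dist3_max_ge0 x01).
  by move=> theta th; apply: dominated_setfun3_max_triple.
- exists (pi_dist3 x (x o0 * x o1 * x o2)).
  split; first exact: pi_dist3_feasible (pi_dist3_indep_ge0 x01).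
  by move=> theta th; apply: dominated_setfun3_indep.
Qed.

End Decomposition.

Section Extensions.
Variables (R : realType) (n : nat) (f : {set 'I_n} -> R) (x : 'I_n -> R).
Variable theta' : {set 'I_n} -> R.
Hypotheses (theta'_pi : pi_feasible x theta')
  (theta'_dom : forall theta, cc_feasible x theta -> dominated theta theta' f).

Let theta'_cc : cc_feasible x theta'. Proof. by case: theta'_pi. Qed.

Local Open Scope classical_set_scope.

Let cc_values := [set objective f theta | theta in [set theta | cc_feasible x theta]].
Let pi_values := [set objective f theta | theta in [set theta | pi_feasible x theta]].

Let has_sup_cc : has_sup cc_values.
Proof.
split; first by exists (objective f theta'); exists theta'.
by exists (4/3 * objective f theta') => _ [theta th <-]; apply: theta'_dom.
Qed.

Let has_sup_pi : has_sup pi_values.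
Proof.
split; first by exists (objective f theta'); exists theta'.
by exists (4/3 * objective f theta') => _ [theta [th _] <-]; apply: theta'_dom.
Qed.

Lemma objective_le_upper_pi_ext : objective f theta' <= upper_pi_ext f x.
Proof. by apply: sup_upper_bound => //; exists theta'. Qed.

Lemma objective_le_concave_closure : objective f theta' <= concave_closure f x.
Proof. by apply: sup_upper_bound => //; exists theta'. Qed.

Lemma concave_closure_le_upper_pi_ext : concave_closure f x <= 4/3 * upper_pi_ext f x.
Proof.
apply: ge_sup; first by exists (objective f theta'); exists theta'.
move=> _ [theta th <-]; apply: le_trans (theta'_dom th) _.
by apply: ler_wpM2l; [lra | exact: objective_le_upper_pi_ext].
Qed.

End Extensions.

Theorem mainTheorem9 (R : realType) (f : {set 'I_3} -> R) (x : 'I_3 -> R) :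
  (forall S, 0 <= f S) ->
  monotone_setfun f ->
  submodular_setfun f ->
  (forall i, 0 <= x i <= 1) ->
  (upper_pi_ext f x = 0 /\ concave_closure f x = 0) \/
  (upper_pi_ext f x != 0 /\
   concave_closure f x / upper_pi_ext f x <= 4%:R / 3%:R).
Proof.
move=> f_ge0 f_mono f_sub x01.
have [theta' [pi dom]] := exists_dominating_pi_feasible f_ge0 f_mono f_sub x01.
have obj_ge0 : 0 <= objective f theta'.
  by apply: objective_ge0 => //; case: pi => -[].
have up_ge := objective_le_upper_pi_ext pi dom.
have cc_ge := objective_le_concave_closure pi dom.
have cc_le := concave_closure_le_upper_pi_ext pi dom.
have [up0 | up_neq0] := eqVneq (upper_pi_ext f x) 0; [left | right].
- by split=> //; apply/eqP; rewrite eq_le; apply/andP; split; lra.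
- have up_gt0 : 0 < upper_pi_ext f x by rewrite lt_def up_neq0; lra.
  by split=> //; rewrite ler_pdivrMr //; lra.
Qed.
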